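(* Given an operator system $\mathcal V \subset B(H)$ and a projection $p \in \mathcal V$, with $q = I-p$, then $(M_2(\mathcal V) / J_{p\oplus q}, \{\widetilde{C}(p_n \oplus q_n)\}_n, (p\oplus q) + J_{p \oplus q})$ is an operator system.
   Context: For $n \in \mathbb N$ let $p_n = I_n \otimes p$, $q_n = I_n \otimes q$, and define $C(p_n \oplus q_n) = \{ x \in M_{2n}(\mathcal V) : x = x^*, \ (p_n \oplus q_n)x(p_n \oplus q_n) \in B(H^{2n})^+\}$, where $M_n(M_2(\mathcal V))$ is identified with $M_2(M_n(\mathcal V)) = M_{2n}(\mathcal V)$ via the canonical shuffle. Let $J_{p \oplus q} = \operatorname{span}\big(C(p\oplus q) \cap -C(p\oplus q)\big) \subseteq M_2(\mathcal V)$, and let $\widetilde{C}(p_n \oplus q_n) = \{ (x_{ij} + J_{p\oplus q}) \in M_n(M_2(\mathcal V)/J_{p\oplus q}) : (x_{ij}) \in C(p_n\oplus q_n)\}$. *)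

From mathcomp Require Import all_boot all_algebra.
From mathcomp Require Import reals.
From mathcomp.real_closed Require Import complex.
Set Implicit Arguments. Unset Strict Implicit. Unset Printing Implicit Defensive.
Import GRing.Theory Num.Theory.
Local Open Scope ring_scope.

Section OpSys.
Variables (R : realType) (H : lmodType R[i]) (ip : H -> H -> R[i]).
Local Notation C := R[i].

Definition hnorm (x : H) : C := sqrtC (ip x x).

Definition is_inner_product : Prop :=
  [/\ forall (a : C) (x y z : H), ip (a *: x + y) z = a * ip x z + ip y z,
      forall x y : H, ip y x = (ip x y)^*,
      forall x : H, 0 <= ip x x
    & forall x : H, ip x x = 0 -> x = 0].

Definition hcomplete : Prop :=
  forall u : nat -> H,
    (forall eps : R, 0 < eps -> exists N : nat, forall m n : nat,
        (N <= m)%N -> (N <= n)%N -> hnorm (u m - u n) < (eps%:C)%C) ->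
    exists l : H, forall eps : R, 0 < eps -> exists N : nat, forall n : nat,
        (N <= n)%N -> hnorm (u n - l) < (eps%:C)%C.

Definition hilbert_space : Prop := is_inner_product /\ hcomplete.

Definition bounded_linear (T : H -> H) : Prop :=
  (forall (a : C) (x y : H), T (a *: x + y) = a *: T x + T y) /\
  exists M : R, forall x : H, hnorm (T x) <= (M%:C)%C * hnorm x.

Definition adjoint_of (S T : H -> H) : Prop :=
  forall x y : H, ip (T x) y = ip x (S y).

Definition operator_system (V : (H -> H) -> Prop) : Prop :=
  [/\ forall T, V T -> bounded_linear T,
      V id,
      forall (a : C) (T S : H -> H), V T -> V S -> V (fun h => a *: T h + S h)
    & forall T, V T -> exists S, V S /\ adjoint_of S T].

Definition projection (p : H -> H) : Prop :=
  (forall h, p (p h) = p h) /\ adjoint_of p p.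

(* an operator on H^I given by the matrix X is in B(H^I)^+ *)
Definition mx_pos (I : finType) (X : I -> I -> H -> H) : Prop :=
  forall h : I -> H, 0 <= \sum_(i : I) \sum_(j : I) ip (X i j (h j)) (h i).

Definition M2 := 'I_2 -> 'I_2 -> H -> H.

(* the diagonal entries of p (+) q, with q = I - p *)
Definition pqd (p : H -> H) (a : 'I_2) : H -> H :=
  if a == ord0 then p else (fun h => h - p h).

(* An element X of M_n(M_2(V)) is written X i j a b (block (i,j), entry (a,b)).
   Via the canonical shuffle it is the element of M_2(M_n(V)) = M_{2n}(V)
   with entry X i j a b at position ((a,i),(b,j)); we index M_{2n} by
   'I_n * 'I_2, which only reorders the basis of H^{2n}. *)
Definition mxV (V : (H -> H) -> Prop) n (X : 'I_n -> 'I_n -> M2) : Prop :=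
  forall i j a b, V (X i j a b).

Definition mx_selfadj n (X : 'I_n -> 'I_n -> M2) : Prop :=
  forall i j a b, adjoint_of (X i j a b) (X j i b a).

Definition compress (p : H -> H) n (X : 'I_n -> 'I_n -> M2)
  : ('I_n * 'I_2)%type -> ('I_n * 'I_2)%type -> H -> H :=
  fun u v h => pqd p u.2 (X u.1 v.1 u.2 v.2 (pqd p v.2 h)).

Definition Cpq (V : (H -> H) -> Prop) (p : H -> H) n (X : 'I_n -> 'I_n -> M2)
  : Prop :=
  [/\ mxV V X, mx_selfadj X & mx_pos (compress p X)].

Definition Cpq1 V p (Y : M2) : Prop := Cpq V p (fun _ _ : 'I_1 => Y).

(* J_{p (+) q} = span (C(p (+) q) \cap - C(p (+) q)) *)
Definition Jpq V p (Y : M2) : Prop :=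
  exists (k : nat) (c : 'I_k -> C) (x : 'I_k -> M2),
    (forall l, Cpq1 V p (x l) /\ Cpq1 V p (fun a b h => - x l a b h)) /\
    (forall a b h, Y a b h = \sum_(l < k) c l *: x l a b h).

(* X = Y in M_n(M_2(V)/J) *)
Definition mx_eqJ V p n (X Y : 'I_n -> 'I_n -> M2) : Prop :=
  forall i j, Jpq V p (fun a b h => X i j a b h - Y i j a b h).

(* the class of X lies in \tilde C(p_n (+) q_n) *)
Definition Ctilde V p n (X : 'I_n -> 'I_n -> M2) : Prop :=
  exists Y, Cpq V p Y /\ mx_eqJ V p X Y.

(* the class of X is hermitian in M_n(M_2(V)/J) *)
Definition mx_herm V p n (X : 'I_n -> 'I_n -> M2) : Prop :=
  forall X' : 'I_n -> 'I_n -> M2,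
    (forall i j a b, adjoint_of (X' i j a b) (X j i b a)) -> mx_eqJ V p X' X.

Definition mx_add n (X Y : 'I_n -> 'I_n -> M2) : 'I_n -> 'I_n -> M2 :=
  fun i j a b h => X i j a b h + Y i j a b h.
Definition mx_scale n (t : C) (X : 'I_n -> 'I_n -> M2) : 'I_n -> 'I_n -> M2 :=
  fun i j a b h => t *: X i j a b h.
Definition mx_zero n : 'I_n -> 'I_n -> M2 := fun _ _ _ _ _ => 0.

Definition mx_conj n m (alpha : 'M[C]_(n, m)) (X : 'I_n -> 'I_n -> M2)
  : 'I_m -> 'I_m -> M2 :=
  fun k l a b h => \sum_(i < n) \sum_(j < n) ((alpha i k)^* * alpha j l) *: X i j a b h.

(* e_n = I_n \otimes (p (+) q), the order unit (p (+) q) + J at level n *)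
Definition unit_n (p : H -> H) n : 'I_n -> 'I_n -> M2 :=
  fun i j a b => if (i == j) && (a == b) then pqd p a else (fun _ => 0).

(* Written out on
   representatives in M_n(M_2(V)):
   - J is self-adjoint, so M_2(V)/J is a *-vector space;
   - each \tilde C_n consists of hermitian elements;
   - each \tilde C_n is a cone;
   - the family is compatible: alpha^* \tilde C_n alpha \subseteq \tilde C_m;
   - \tilde C_n \cap - \tilde C_n = {0};
   - e is a matrix order unit;
   - e is Archimedean. *)
Definition quotient_is_operator_system (V : (H -> H) -> Prop) (p : H -> H)
  : Prop :=
  [/\ forall Y Y' : M2, Jpq V p Y ->
        (forall a b, adjoint_of (Y' a b) (Y b a)) -> Jpq V p Y',
      forall n (X : 'I_n -> 'I_n -> M2), mxV V X ->
        Ctilde V p X -> mx_herm V p X,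
      forall n (X Y : 'I_n -> 'I_n -> M2), mxV V X -> mxV V Y ->
        Ctilde V p X -> Ctilde V p Y -> Ctilde V p (mx_add X Y),
      forall n (X : 'I_n -> 'I_n -> M2) (t : R), mxV V X -> 0 <= t ->
        Ctilde V p X -> Ctilde V p (mx_scale (t%:C)%C X) &
    [/\ forall n m (alpha : 'M[C]_(n, m)) (X : 'I_n -> 'I_n -> M2), mxV V X ->
        Ctilde V p X -> Ctilde V p (mx_conj alpha X),
      forall n (X : 'I_n -> 'I_n -> M2), mxV V X ->
        Ctilde V p X -> Ctilde V p (mx_scale (-1) X) -> mx_eqJ V p X ((@mx_zero n)),
      forall n (X : 'I_n -> 'I_n -> M2), mxV V X -> mx_herm V p X ->
        exists r : R, 0 < r /\
          Ctilde V p (mx_add X (mx_scale (r%:C)%C (@unit_n p n)))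
    & forall n (X : 'I_n -> 'I_n -> M2), mxV V X -> mx_herm V p X ->
        (forall r : R, 0 < r ->
          Ctilde V p (mx_add X (mx_scale (r%:C)%C (@unit_n p n)))) ->
        Ctilde V p X]].

End OpSys.

From HB Require Import structures.
From mathcomp Require Import all_boot all_order all_algebra.
From mathcomp Require Import reals boolp.
From mathcomp.real_closed Require Import complex.
From mathcomp Require Import ring lra.
Set Implicit Arguments. Unset Strict Implicit. Unset Printing Implicit Defensive.
Import Order.TTheory GRing.Theory Num.Theory.
Local Open Scope ring_scope.

(* The ideal J_{p+q} consists exactly of the Y in M_2(V) whose four corners
   p Y11 p, p Y12 q, q Y21 p, q Y22 q vanish.  An element of C(p+q) that also
   lies in -C(p+q) has a compression whose quadratic form vanishes, so by
   polarization its corners are zero; conversely a Y with vanishing corners is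
   a linear combination of two selfadjoint such elements.
   Hence X + J lies in C~(p_n+q_n) iff the compression (p_n+q_n) X (p_n+q_n) is
   positive, and X + J is hermitian iff that compression is selfadjoint.  Every
   axiom thereby becomes a statement about compressions: positivity survives
   sums, positive multiples and conjugation by alpha (which substitutes
   alpha h into the quadratic form); the entries of X are bounded, so the form
   is bounded below by -S |(p_n+q_n) h|^2 and adding r (p+q) with r > S makes it
   positive; and the Archimedean property follows by letting r tend to 0. *)

Lemma sum_pair_swap (M : nmodType) (X Y K : finType) (F : X * K -> Y -> M) :
  \sum_(u : X * K) \sum_(y : Y) F u y = \sum_(w : Y * K) \sum_(x : X) F (x, w.2) w.1.
Proof.
transitivity (\sum_x \sum_k \sum_y F (x, k) y).
  by rewrite [RHS]pair_bigA; apply: eq_bigr => -[].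
transitivity (\sum_y \sum_k \sum_x F (x, k) y); last first.
  by rewrite [LHS]pair_bigA; apply: eq_bigr => -[].
under eq_bigr => x _ do rewrite exchange_big.
by rewrite exchange_big; apply: eq_bigr => y _; rewrite exchange_big.
Qed.

Section InnerProduct.
Variables (R : realType) (H : lmodType R[i]) (ip : H -> H -> R[i]).
Hypothesis hip : is_inner_product ip.

Lemma ipC x y : ip y x = (ip x y)^*.
Proof. by case: hip. Qed.

Lemma ip_ge0 x : 0 <= ip x x.
Proof. by case: hip. Qed.

Lemma ipDZl a x y z : ip (a *: x + y) z = a * ip x z + ip y z.
Proof. by case: hip => ->. Qed.

Lemma ipDl x y z : ip (x + y) z = ip x z + ip y z.
Proof. by have := ipDZl 1 x y z; rewrite scale1r mul1r. Qed.

Lemma ip0l z : ip 0 z = 0.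
Proof. by have := ipDZl (-1) 0 0 z; rewrite scaler0 addr0 mulN1r addNr. Qed.

Lemma ipZl a x z : ip (a *: x) z = a * ip x z.
Proof. by rewrite -[a *: x]addr0 ipDZl ip0l addr0. Qed.

Lemma ipNl x z : ip (- x) z = - ip x z.
Proof. by rewrite -scaleN1r ipZl mulN1r. Qed.

Lemma ipBl x y z : ip (x - y) z = ip x z - ip y z.
Proof. by rewrite ipDl ipNl. Qed.

Lemma ipDr x y z : ip z (x + y) = ip z x + ip z y.
Proof. by rewrite ipC ipDl rmorphD /= -!ipC. Qed.

Lemma ipZr a x z : ip z (a *: x) = a^* * ip z x.
Proof. by rewrite ipC ipZl rmorphM /= -!ipC. Qed.

Lemma ip0r z : ip z 0 = 0.
Proof. by rewrite ipC ip0l rmorph0. Qed.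

Lemma ipNr x z : ip z (- x) = - ip z x.
Proof. by rewrite ipC ipNl rmorphN /= -ipC. Qed.

Lemma ipBr x y z : ip z (x - y) = ip z x - ip z y.
Proof. by rewrite ipDr ipNr. Qed.

Lemma ip_suml (I : Type) (r : seq I) (P : pred I) (F : I -> H) z :
  ip (\sum_(i <- r | P i) F i) z = \sum_(i <- r | P i) ip (F i) z.
Proof. by apply: (big_morph (ip^~ z)) => [x y|]; rewrite ?ipDl ?ip0l. Qed.

Lemma ip_sumr (I : Type) (r : seq I) (P : pred I) (F : I -> H) z :
  ip z (\sum_(i <- r | P i) F i) = \sum_(i <- r | P i) ip z (F i).
Proof. by rewrite ipC ip_suml rmorph_sum /=; apply: eq_bigr => i _; rewrite -ipC. Qed.

Lemma ip_eq0 x : (forall y, ip x y = 0) -> x = 0.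
Proof. by case: hip => _ _ _ nondeg /(_ x)/nondeg. Qed.

Lemma adjoint_swap S T : adjoint_of ip S T -> adjoint_of ip T S.
Proof. by move=> hST x y; rewrite ipC -hST -ipC. Qed.

Lemma adjoint_uniq S S' T : adjoint_of ip S T -> adjoint_of ip S' T -> S = S'.
Proof.
move=> hS hS'; apply/funext => y; apply/eqP; rewrite -subr_eq0; apply/eqP.
by apply: ip_eq0 => x; rewrite ipBl ipC -hS hS' -ipC subrr.
Qed.

Lemma adjoint0 : adjoint_of ip (fun _ => 0) (fun _ => 0).
Proof. by move=> x y; rewrite ip0l ip0r. Qed.

Lemma adjointN S T : adjoint_of ip S T -> adjoint_of ip (fun h => - S h) (fun h => - T h).
Proof. by move=> hST x y; rewrite ipNl ipNr hST. Qed.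

Lemma adjoint_hermitian_part (K : Type) (c : R[i]) (Y Ys : K -> K -> H -> H) :
  (forall u v, adjoint_of ip (Ys u v) (Y v u)) ->
  forall u v, adjoint_of ip (fun h => c *: Y u v h + c^* *: Ys u v h)
                            (fun h => c *: Y v u h + c^* *: Ys v u h).
Proof.
move=> hYs u v x y; rewrite ipDl ipDr !ipZl !ipZr conjCK.
by rewrite -hYs (adjoint_swap (hYs v u)) addrC.
Qed.

Lemma ipRe_ge x y : - (ip x x + ip y y) <= ip x y + (ip x y)^*.
Proof.
rewrite -subr_ge0 opprK.
have -> : ip x y + (ip x y)^* + (ip x x + ip y y) = ip (x + y) (x + y).
  by rewrite ipDl !ipDr [ip y x]ipC; ring.
exact: ip_ge0.
Qed.

End InnerProduct.

Section LinearOperator.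
Variables (R : realType) (H : lmodType R[i]) (T : H -> H).
Hypothesis linT : linear T.
HB.instance Definition _ := GRing.isLinear.Build R[i] H H *:%R T linT.

Lemma lin0 : T 0 = 0.
Proof. exact: linear0. Qed.

Lemma linB x y : T (x - y) = T x - T y.
Proof. exact: linearB. Qed.

Lemma linZ a x : T (a *: x) = a *: T x.
Proof. exact: linearZ. Qed.

Lemma lin_sum (I : Type) (r : seq I) (P : pred I) (F : I -> H) :
  T (\sum_(i <- r | P i) F i) = \sum_(i <- r | P i) T (F i).
Proof. exact: linear_sum. Qed.

End LinearOperator.

Section ComplexNumbers.
Variable R : rcfType.

Let two_neq0 : 2 != 0 :> R[i]. Proof. by rewrite pnatr_eq0. Qed.

Lemma polarC (x y : R[i]) : 2 * x = (x + y) + 'i * ('i * (y - x)).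
Proof. by rewrite mulrA -expr2 sqrCi; ring. Qed.

Lemma polarC_eq0 (x y : R[i]) : x + y = 0 -> 'i * (y - x) = 0 -> x = 0.
Proof.
move=> s0 t0; apply: (mulfI two_neq0).
by rewrite (polarC x y) s0 t0 !mulr0 addr0.
Qed.

Lemma polarC_conj (x y : R[i]) :
  x + y \is Num.real -> 'i * (y - x) \is Num.real -> y = x^*.
Proof.
rewrite !CrealE => /eqP s_real /eqP t_real; apply: (mulfI two_neq0).
have -> : 2 * x^* = (2 * x)^* by rewrite rmorphM /= conjC_nat.
rewrite (polarC y x) (polarC x y) rmorphD rmorphM /= conjCi s_real t_real.
ring.
Qed.

Lemma archimedeanC (z N : R[i]) : z^* = z -> 0 <= N ->
  (forall r : R, 0 < r -> 0 <= z + r%:C%C * N) -> 0 <= z.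
Proof.
move=> z_real N_ge0.
have /complex_realP [x ->] : z \is Num.real by rewrite CrealE z_real.
have /complex_realP [m defN] := ger0_real N_ge0.
move: N_ge0; rewrite defN !ler0c => N_ge0 shift_ge0.
apply/ler_addgt0Pr => e e_gt0.
have m1_gt0 : 0 < m + 1 by apply: ltr_wpDl N_ge0 ltr01.
have := shift_ge0 (e / (m + 1)) (divr_gt0 e_gt0 m1_gt0).
rewrite -rmorphM -rmorphD ler0c => /le_trans; apply; rewrite lerD2l.
by rewrite -mulrA ler_piMr ?ltW // mulrC ltr_pdivrMr // mul1r ltrDl.
Qed.

Lemma order_unitC (z N : R[i]) (S : R) : z^* = z -> 0 <= N -> 0 <= S ->
  - (S%:C%C * N) <= z + z^* -> 0 <= z + (S + 1)%:C%C * N.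
Proof.
move=> z_real N_ge0 S_ge0; rewrite z_real.
have /complex_realP [x ->] : z \is Num.real by rewrite CrealE z_real.
have /complex_realP [m defN] := ger0_real N_ge0.
move: N_ge0; rewrite defN ler0c => N_ge0.
rewrite -!rmorphM -rmorphN -!rmorphD !lecR => lower.
have : 0 <= S * m by rewrite mulr_ge0.
nra.
Qed.

End ComplexNumbers.

Section BlockForm.
Variables (R : realType) (H : lmodType R[i]) (ip : H -> H -> R[i]).
Hypothesis hip : is_inner_product ip.
Variable I : finType.
Implicit Types (A B : I -> I -> H -> H) (g h : I -> H).

Definition block_form A g h : R[i] := \sum_u \sum_v ip (A u v (g v)) (h u).

Lemma block_formD A B g h :
  block_form (fun u v x => A u v x + B u v x) g h = block_form A g h + block_form B g h.
Proof.
rewrite /block_form -big_split; apply: eq_bigr => u _.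
by rewrite -big_split; apply: eq_bigr => v _; rewrite (ipDl hip).
Qed.

Lemma block_formZ c A g h :
  block_form (fun u v x => c *: A u v x) g h = c * block_form A g h.
Proof.
rewrite /block_form mulr_sumr; apply: eq_bigr => u _.
by rewrite mulr_sumr; apply: eq_bigr => v _; rewrite (ipZl hip).
Qed.

Lemma block_formN A g h :
  block_form (fun u v x => - A u v x) g h = - block_form A g h.
Proof.
rewrite /block_form -sumrN; apply: eq_bigr => u _.
by rewrite -sumrN; apply: eq_bigr => v _; rewrite (ipNl hip).
Qed.

Lemma mx_posP A : mx_pos ip A <-> forall g, 0 <= block_form A g g.
Proof. by []. Qed.

Lemma mx_pos0 A : (forall u v x, A u v x = 0) -> mx_pos ip A.
Proof.
move=> A0 g; rewrite big1 // => u _; rewrite big1 // => v _.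
by rewrite A0 (ip0l hip).
Qed.

Lemma mx_posD A B : mx_pos ip A -> mx_pos ip B -> mx_pos ip (fun u v x => A u v x + B u v x).
Proof. by move=> /mx_posP PA /mx_posP PB; apply/mx_posP => g; rewrite block_formD addr_ge0. Qed.

Lemma mx_posZ c A : 0 <= c -> mx_pos ip A -> mx_pos ip (fun u v x => c *: A u v x).
Proof. by move=> c0 /mx_posP PA; apply/mx_posP => g; rewrite block_formZ mulr_ge0. Qed.

Lemma block_form_real A g :
  (forall u v, adjoint_of ip (A u v) (A v u)) -> (block_form A g g)^* = block_form A g g.
Proof.
move=> saA; rewrite /block_form rmorph_sum /=.
under eq_bigr => u _ do rewrite rmorph_sum /=.
rewrite exchange_big; apply: eq_bigr => v _; apply: eq_bigr => u _.
by rewrite -(ipC hip) (adjoint_swap hip (saA v u)).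
Qed.

Lemma block_formRe_ge (K N : R[i]) A g : 0 <= K ->
  (forall u v x, ip (A u v x) (A u v x) <= K * ip x x) -> (forall u, ip (g u) (g u) <= N) ->
  - ((#|I| * #|I|)%:R * ((K + 1) * N)) <= block_form A g g + (block_form A g g)^*.
Proof.
move=> K0 boundA boundg.
have -> : - ((#|I| * #|I|)%:R * ((K + 1) * N)) = \sum_(u : I) \sum_(v : I) - ((K + 1) * N).
  by rewrite !sumr_const mulr_natl -mulNrn mulrnA.
rewrite /block_form rmorph_sum -big_split; apply: ler_sum => u _.
rewrite rmorph_sum -big_split; apply: ler_sum => v _.
apply: le_trans (ipRe_ge hip _ _); rewrite lerN2 mulrDl mul1r.
apply: lerD (boundg u); apply: le_trans (boundA u v (g v)) _.
exact: ler_wpM2l.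
Qed.

Section LinearEntries.
Variable A : I -> I -> H -> H.
Hypothesis linA : forall u v, linear (A u v).

Lemma block_formDZl a g g' h :
  block_form A (fun w => a *: g w + g' w) h = a * block_form A g h + block_form A g' h.
Proof.
rewrite /block_form mulr_sumr -big_split; apply: eq_bigr => u _.
by rewrite mulr_sumr -big_split; apply: eq_bigr => v _; rewrite linA (ipDZl hip).
Qed.

Lemma block_formDZr a g h h' :
  block_form A g (fun w => a *: h w + h' w) = a^* * block_form A g h + block_form A g h'.
Proof.
rewrite /block_form mulr_sumr -big_split; apply: eq_bigr => u _.
by rewrite mulr_sumr -big_split; apply: eq_bigr => v _; rewrite (ipDr hip) (ipZr hip).
Qed.

Lemma block_form_polarD g h :
  block_form A (fun w => 1 *: h w + g w) (fun w => 1 *: h w + g w)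
  = block_form A g g + block_form A h h + (block_form A g h + block_form A h g).
Proof. by rewrite block_formDZl !block_formDZr conjC1; ring. Qed.

Lemma block_form_polarZ g h :
  block_form A (fun w => 'i *: h w + g w) (fun w => 'i *: h w + g w)
  = block_form A g g + block_form A h h + 'i * (block_form A h g - block_form A g h).
Proof.
rewrite block_formDZl !block_formDZr conjCi.
by rewrite mulrDr !mulrA mulrN -expr2 sqrCi; ring.
Qed.

Let delta v x : I -> H := fun w => if w == v then x else 0.

Lemma block_form_delta u v x y : block_form A (delta v x) (delta u y) = ip (A u v x) y.
Proof.
rewrite /block_form (bigD1 u) //= [X in _ + X]big1 => [|u' /negbTE nu]; last first.
  by rewrite big1 // => v' _; rewrite /delta nu (ip0r hip).
rewrite addr0 (bigD1 v) //= [X in _ + X]big1 => [|v' /negbTE nv].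
  by rewrite addr0 /delta !eqxx.
by rewrite /delta nv lin0 ?(ip0l hip).
Qed.

Lemma block_form_eq0 : (forall g, block_form A g g = 0) -> forall u v x, A u v x = 0.
Proof.
move=> form0 u v x; apply: (ip_eq0 hip) => y; rewrite -block_form_delta.
apply: (polarC_eq0 (y := block_form A (delta u y) (delta v x))).
  by have := block_form_polarD (delta v x) (delta u y); rewrite !form0 !add0r.
by have := block_form_polarZ (delta v x) (delta u y); rewrite !form0 !add0r.
Qed.

Lemma block_form_adjoint :
  (forall g, block_form A g g \is Num.real) -> forall u v, adjoint_of ip (A v u) (A u v).
Proof.
move=> form_real u v x y; rewrite -block_form_delta (ipC hip) -block_form_delta.
set g := delta v x; set h := delta u y.
apply: polarC_conj.
  have /esym/(canRL (addKr _)) -> := block_form_polarD h g.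
  by rewrite rpredD ?rpredN // rpredD.
have /esym/(canRL (addKr _)) -> := block_form_polarZ h g.
by rewrite rpredD ?rpredN // rpredD.
Qed.

End LinearEntries.
End BlockForm.

Section BlockFormConj.
Variables (R : realType) (H : lmodType R[i]) (ip : H -> H -> R[i]).
Hypothesis hip : is_inner_product ip.
Variables (I J K : finType) (alpha : I -> J -> R[i]) (A : I * K -> I * K -> H -> H).
Hypothesis linA : forall u v, linear (A u v).

Lemma block_form_conj g :
  block_form ip (fun u v x =>
    \sum_i \sum_j ((alpha i u.1)^* * alpha j v.1) *: A (i, u.2) (j, v.2) x) g g
  = block_form ip A (fun w => \sum_l alpha w.1 l *: g (l, w.2))
                    (fun w => \sum_l alpha w.1 l *: g (l, w.2)).
Proof.
have expandl u v :
    ip (\sum_i \sum_j ((alpha i u.1)^* * alpha j v.1) *: A (i, u.2) (j, v.2) (g v)) (g u)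
    = \sum_i \sum_j (alpha i u.1)^* * alpha j v.1 * ip (A (i, u.2) (j, v.2) (g v)) (g u).
  rewrite (ip_suml hip); apply: eq_bigr => i _.
  by rewrite (ip_suml hip); apply: eq_bigr => j _; rewrite (ipZl hip).
have expandr w z :
    ip (A w z (\sum_l alpha z.1 l *: g (l, z.2))) (\sum_k alpha w.1 k *: g (k, w.2))
    = \sum_k \sum_l (alpha w.1 k)^* * alpha z.1 l * ip (A w z (g (l, z.2))) (g (k, w.2)).
  rewrite (lin_sum (linA w z)) (ip_suml hip) exchange_big; apply: eq_bigr => k _.
  rewrite (ip_sumr hip); apply: eq_bigr => l _.
  by rewrite (linZ (linA w z)) (ipZl hip) (ipZr hip) mulrCA mulrA.
rewrite /block_form.
under eq_bigr => u _ do under eq_bigr => v _ do rewrite expandl.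
under [RHS]eq_bigr => w _ do under eq_bigr => z _ do rewrite expandr.
under eq_bigr => u _ do rewrite exchange_big.
rewrite sum_pair_swap; apply: eq_bigr => -[i c] _ /=.
under eq_bigr => k _ do rewrite sum_pair_swap.
by rewrite exchange_big; apply: eq_bigr => -[j d] _.
Qed.
End BlockFormConj.

Section OperatorSystem.
Variables (R : realType) (H : lmodType R[i]) (ip : H -> H -> R[i]).
Variable V : (H -> H) -> Prop.
Hypothesis hip : is_inner_product ip.
Hypothesis os : operator_system ip V.

Let V_eqfun T S : V T -> T =1 S -> V S.
Proof. by move=> VT /funext <-. Qed.

Lemma V_linear T : V T -> linear T.
Proof. by case: os => bounded _ _ _ /bounded []. Qed.

Lemma V_id : V id.
Proof. by case: os. Qed.

Lemma V_comb a T S : V T -> V S -> V (fun h => a *: T h + S h).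
Proof. by case: os => _ _ comb _; apply: comb. Qed.

Lemma V0 : V (fun _ => 0).
Proof. by apply: V_eqfun (V_comb (-1) V_id V_id) _ => h; rewrite scaleN1r addNr. Qed.

Lemma VD T S : V T -> V S -> V (fun h => T h + S h).
Proof. by move=> VT VS; apply: V_eqfun (V_comb 1 VT VS) _ => h; rewrite scale1r. Qed.

Lemma VZ a T : V T -> V (fun h => a *: T h).
Proof. by move=> VT; apply: V_eqfun (V_comb a VT V0) _ => h; rewrite addr0. Qed.

Lemma VN T : V T -> V (fun h => - T h).
Proof. by move=> VT; apply: V_eqfun (VZ (-1) VT) _ => h; rewrite scaleN1r. Qed.

Lemma VB T S : V T -> V S -> V (fun h => T h - S h).
Proof. by move=> VT VS; apply: V_eqfun (V_comb (-1) VS VT) _ => h; rewrite scaleN1r addrC. Qed.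

Lemma V_sum (I : Type) (r : seq I) (P : pred I) (F : I -> H -> H) :
  (forall i, V (F i)) -> V (fun h => \sum_(i <- r | P i) F i h).
Proof.
move=> VF; elim: r => [|i r IH]; first by apply: V_eqfun V0 _ => h; rewrite big_nil.
case Pi: (P i).
  by apply: V_eqfun (VD (VF i) IH) _ => h; rewrite big_cons Pi.
by apply: V_eqfun IH _ => h; rewrite big_cons Pi.
Qed.

Lemma V_adjoint S T : V T -> adjoint_of ip S T -> V S.
Proof.
case: os => _ _ _ has_adj /has_adj [S' [VS' hS']] hS.
by rewrite (adjoint_uniq hip hS hS').
Qed.

Lemma exists_adjoint_transpose (K : Type) (Y : K -> K -> H -> H) :
  (forall u v, V (Y u v)) ->
  exists Ys : K -> K -> H -> H, forall u v, V (Ys u v) /\ adjoint_of ip (Ys u v) (Y v u).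
Proof.
move=> VY.
have /choice [adj hadj] : forall uv : K * K, exists S, V S /\ adjoint_of ip S (Y uv.2 uv.1).
  by case=> u v; case: os => _ _ _ /(_ _ (VY v u)).
by exists (fun u v => adj (u, v)) => u v; apply: hadj (u, v).
Qed.

Lemma exists_mx_adjoint n (X : 'I_n -> 'I_n -> M2 H) : mxV V X ->
  exists Xs, mxV V Xs /\ forall i j a b, adjoint_of ip (Xs i j a b) (X j i b a).
Proof.
move=> VX; have [Ys hYs] := exists_adjoint_transpose (fun u v : 'I_n * 'I_2 => VX u.1 v.1 u.2 v.2).
by exists (fun i j a b => Ys (i, a) (j, b)); split=> i j a b; case: (hYs (i, a) (j, b)).
Qed.

Lemma V_bounded T : V T -> exists K : R, 0 <= K /\ forall x, ip (T x) (T x) <= K%:C%C * ip x x.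
Proof.
case: os => bounded _ _ _ /bounded [_ [M hM]].
exists (M ^+ 2); split=> [|x]; first exact: sqr_ge0.
have := hM x; rewrite /hnorm => leTx.
have Tx_ge0 : 0 <= sqrtC (ip (T x) (T x)) by rewrite sqrtC_ge0 (ip_ge0 hip).
move: (leTx); rewrite -(ler_pXn2r (n := 2)) ?nnegrE //; last exact: le_trans Tx_ge0 leTx.
by rewrite exprMn !sqrtCK -rmorphXn.
Qed.

Lemma V_bounded_family (I : finType) (T : I -> H -> H) : (forall i, V (T i)) ->
  exists K : R, 0 <= K /\ forall i x, ip (T i x) (T i x) <= K%:C%C * ip x x.
Proof.
move=> VT; have /choice [K hK] := fun i => V_bounded (VT i).
have K_ge0 i : 0 <= K i by case: (hK i).
exists (\sum_i K i); split=> [|i x]; first exact: sumr_ge0.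
apply: le_trans ((hK i).2 x) _; rewrite ler_wpM2r ?(ip_ge0 hip) // lecR.
by rewrite (bigD1 i) //= lerDl sumr_ge0.
Qed.

End OperatorSystem.

Section CornerQuotient.
Variables (R : realType) (H : lmodType R[i]) (ip : H -> H -> R[i]).
Variables (V : (H -> H) -> Prop) (p : H -> H).
Hypothesis hip : is_inner_product ip.
Hypothesis os : operator_system ip V.
Hypothesis Vp : V p.
Hypothesis proj_p : projection ip p.
Local Notation pq := (pqd p).

Lemma V_pq a : V (pq a).
Proof. by rewrite /pqd; case: (a == ord0) => //; exact: (VB os (V_id os) Vp). Qed.

Lemma pq_linear a : linear (pq a).
Proof. exact (V_linear os (V_pq a)). Qed.

HB.instance Definition _ a := GRing.isLinear.Build R[i] H H *:%R (pq a) (pq_linear a).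

Lemma pq_idem a h : pq a (pq a h) = pq a h.
Proof.
case: proj_p => p_idem _; rewrite /pqd; case: (a == ord0) => //.
by rewrite (linB (V_linear os Vp)) p_idem subrr subr0.
Qed.

Lemma pq_selfadjoint a : adjoint_of ip (pq a) (pq a).
Proof.
case: proj_p => _ p_sa; rewrite /pqd; case: (a == ord0) => // x y.
by rewrite (ipBl hip) (ipBr hip) p_sa.
Qed.

Lemma adjoint_corner S T a b : adjoint_of ip S T ->
  adjoint_of ip (fun h => pq a (S (pq b h))) (fun h => pq b (T (pq a h))).
Proof. by move=> hST x y; rewrite pq_selfadjoint hST pq_selfadjoint. Qed.

Lemma compress_linear n (X : 'I_n -> 'I_n -> M2 H) u v : mxV V X -> linear (compress p X u v).
Proof. by move=> VX c x y; rewrite /compress linearP (V_linear os (VX _ _ _ _)) linearP. Qed.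

Lemma compressN n (X : 'I_n -> 'I_n -> M2 H) :
  compress p (fun i j a b h => - X i j a b h) = fun u v h => - compress p X u v h.
Proof. by apply/funext => u; apply/funext => v; apply/funext => h; rewrite /compress linearN. Qed.

Lemma compressD n (X Y : 'I_n -> 'I_n -> M2 H) :
  compress p (mx_add X Y) = fun u v h => compress p X u v h + compress p Y u v h.
Proof. by apply/funext => u; apply/funext => v; apply/funext => h; rewrite /compress linearD. Qed.

Lemma compressZ n c (X : 'I_n -> 'I_n -> M2 H) :
  compress p (mx_scale c X) = fun u v h => c *: compress p X u v h.
Proof. by apply/funext => u; apply/funext => v; apply/funext => h; rewrite /compress linearZ. Qed.

Lemma adjoint_corner0 S T a b : adjoint_of ip S T ->
  (forall h, pq b (T (pq a h)) = 0) -> forall h, pq a (S (pq b h)) = 0.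
Proof.
move=> hST T0 h; have := adjoint_corner a b hST.
rewrite (_ : (fun h => pq b (T (pq a h))) = fun _ => 0); last exact/funext.
by move/(adjoint_uniq hip)/(_ (adjoint0 hip))/(congr1 (fun f => f h)).
Qed.

Lemma Cpq1_corners0 (x : M2 H) : (forall a b, V (x a b)) ->
  (forall a b, adjoint_of ip (x a b) (x b a)) -> (forall a b h, pq a (x a b (pq b h)) = 0) ->
  Cpq1 ip V p x.
Proof.
move=> Vx sa_x x0; split=> [i j a b|i j a b|]; [exact: Vx | exact: sa_x |].
by apply: (mx_pos0 hip) => u v h; apply: x0.
Qed.

Lemma Cpq1_antisym_corners0 (x : M2 H) : Cpq1 ip V p x -> Cpq1 ip V p (fun a b h => - x a b h) ->
  forall a b h, pq a (x a b (pq b h)) = 0.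
Proof.
move=> [Vx _ Px] [_ _]; rewrite compressN => /mx_posP Nx a b h.
have linA u v : linear (compress p (fun _ _ : 'I_1 => x) u v) := compress_linear u v Vx.
apply: (block_form_eq0 hip linA _ (ord0, a) (ord0, b)) => g.
by apply: le_anti; rewrite Px andbT -oppr_ge0 -block_formN.
Qed.

Lemma Jpq_corners0 (Y : M2 H) : Jpq ip V p Y ->
  (forall a b, V (Y a b)) /\ forall a b h, pq a (Y a b (pq b h)) = 0.
Proof.
move=> [k [c [x [Cx defY]]]].
have Vx l a b : V (x l a b) by case: (Cx l) => [[Vx _ _] _]; exact: (Vx ord0 ord0 a b).
have x0 l := Cpq1_antisym_corners0 (Cx l).1 (Cx l).2.
split=> [a b | a b h].
  have -> : Y a b = fun h => \sum_(l < k) c l *: x l a b h by apply/funext => h; apply: defY.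
  exact (V_sum os _ _ (fun l => VZ os (c l) (Vx l a b))).
by rewrite defY linear_sum big1 // => l _; rewrite linearZ /= x0 scaler0.
Qed.

Lemma corners0_Jpq (Y : M2 H) : (forall a b, V (Y a b)) ->
  (forall a b h, pq a (Y a b (pq b h)) = 0) -> Jpq ip V p Y.
Proof.
move=> VY Y0; have [Ys hYs] := exists_adjoint_transpose os VY.
have Ys0 a b h : pq a (Ys a b (pq b h)) = 0 := adjoint_corner0 (hYs a b).2 (Y0 b a) h.
pose herm c : M2 H := fun a b h => c *: Y a b h + c^* *: Ys a b h.
have Vherm c a b : V (herm c a b) := VD os (VZ os _ (VY a b)) (VZ os _ (hYs a b).1).
have sa_herm c a b : adjoint_of ip (herm c a b) (herm c b a) :=
  adjoint_hermitian_part hip c (fun u v => (hYs u v).2) a b.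
have herm0 c a b h : pq a (herm c a b (pq b h)) = 0.
  by rewrite linearD !linearZ /= Y0 Ys0 !scaler0 addr0.
have Cherm c : Cpq1 ip V p (herm c) /\ Cpq1 ip V p (fun a b h => - herm c a b h).
  split; apply: Cpq1_corners0 => a b.
  - exact: Vherm.
  - exact: sa_herm.
  - exact: herm0.
  - exact (VN os (Vherm c a b)).
  - exact (adjointN hip (sa_herm c a b)).
  - by move=> h; rewrite linearN /= herm0 oppr0.
(* Y = (Y + Y^* )/2 + i/2 (- i Y + i Y^* ) *)
exists 2, (fun l : 'I_2 => if l == ord0 then 2^-1 else 'i / 2).
exists (fun l : 'I_2 => if l == ord0 then herm 1 else herm (- 'i)); split.
  by move=> l; case: (l == ord0).
move=> a b h; rewrite big_ord_recl big_ord1 /= /herm conjC1 rmorphN /= conjCi opprK !scale1r.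
rewrite !scalerDr !scalerA addrACA -!scalerDl mulrN mulrAC -expr2 sqrCi.
have -> : 2^-1 + - (-1 / 2) = 1 :> R[i] by field.
by rewrite mulN1r subrr scale0r scale1r addr0.
Qed.

Lemma JpqP (Y : M2 H) : Jpq ip V p Y <->
  (forall a b, V (Y a b)) /\ forall a b h, pq a (Y a b (pq b h)) = 0.
Proof. by split=> [/Jpq_corners0 | [VY Y0]]; last exact: corners0_Jpq. Qed.

Lemma mx_eqJP n (X Y : 'I_n -> 'I_n -> M2 H) : mxV V X -> mxV V Y ->
  mx_eqJ ip V p X Y <-> compress p X = compress p Y.
Proof.
move=> VX VY; split=> [eqXY | eqXY i j].
  apply/funext => u; apply/funext => v; apply/funext => h; apply/subr0_eq.
  by rewrite /compress -linearB; apply: ((JpqP _).1 (eqXY u.1 v.1)).2.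
apply/JpqP; split=> [a b | a b h]; first exact (VB os (VX i j a b) (VY i j a b)).
have := congr1 (fun A => A (i, a) (j, b) h) eqXY.
by rewrite linearB /compress /= => ->; rewrite subrr.
Qed.

Lemma compress_adjoint_transpose n (X Xs : 'I_n -> 'I_n -> M2 H) :
  (forall i j a b, adjoint_of ip (Xs i j a b) (X j i b a)) ->
  forall u v, adjoint_of ip (compress p Xs u v) (compress p X v u).
Proof. by move=> hXs u v; apply: adjoint_corner. Qed.

Lemma compress_pos_adjoint n (X : 'I_n -> 'I_n -> M2 H) : mxV V X ->
  mx_pos ip (compress p X) -> forall u v, adjoint_of ip (compress p X u v) (compress p X v u).
Proof.
move=> VX PX u v.
exact (block_form_adjoint hip (fun u v => compress_linear u v VX) (fun g => ger0_real (PX g)) v u).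
Qed.

Lemma mx_hermP n (X : 'I_n -> 'I_n -> M2 H) : mxV V X ->
  mx_herm ip V p X <-> forall u v, adjoint_of ip (compress p X u v) (compress p X v u).
Proof.
move=> VX; split=> [hermX u v | saX Xs hXs].
  have [Xs [VXs hXs]] := exists_mx_adjoint os VX.
  by have := compress_adjoint_transpose hXs u v; rewrite ((mx_eqJP VXs VX).1 (hermX Xs hXs)).
have VXs : mxV V Xs := fun i j a b => V_adjoint hip os (VX j i b a) (hXs i j a b).
apply/(mx_eqJP VXs VX); apply/funext => u; apply/funext => v.
exact (adjoint_uniq hip (compress_adjoint_transpose hXs u v) (saX u v)).
Qed.

Lemma CtildeP n (X : 'I_n -> 'I_n -> M2 H) : mxV V X ->
  Ctilde ip V p X <-> mx_pos ip (compress p X).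
Proof.
move=> VX; split=> [[Y [[VY _ PY] eqXY]] | PX]; first by rewrite ((mx_eqJP VX VY).1 eqXY).
have [Xs [VXs hXs]] := exists_mx_adjoint os VX.
have eqXs : compress p Xs = compress p X.
  apply/funext => u; apply/funext => v.
  exact (adjoint_uniq hip (compress_adjoint_transpose hXs u v) (compress_pos_adjoint VX PX u v)).
pose Y := mx_add (mx_scale 2^-1 X) (mx_scale (2^-1)^* Xs).
have VY : mxV V Y := fun i j a b => VD os (VZ os _ (VX i j a b)) (VZ os _ (VXs i j a b)).
have eqY : compress p Y = compress p X.
  rewrite compressD !compressZ eqXs fmorphV /= conjC_nat.
  apply/funext => u; apply/funext => v; apply/funext => h.
  by rewrite -scalerDl (_ : 2^-1 + 2^-1 = 1 :> R[i]) ?scale1r //; field.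
exists Y; split; last by apply/(mx_eqJP VX VY).
split=> //; last by rewrite eqY.
move=> i j a b.
exact (adjoint_hermitian_part hip _ (fun u v => hXs u.1 v.1 u.2 v.2) (i, a) (j, b)).
Qed.

Lemma Jpq_adjoint (Y Y' : M2 H) : Jpq ip V p Y ->
  (forall a b, adjoint_of ip (Y' a b) (Y b a)) -> Jpq ip V p Y'.
Proof.
move=> /JpqP [VY Y0] hY'; apply/JpqP; split=> [a b | a b h].
  exact (V_adjoint hip os (VY b a) (hY' a b)).
exact: adjoint_corner0 (hY' a b) (Y0 b a) h.
Qed.

Lemma Ctilde_herm n (X : 'I_n -> 'I_n -> M2 H) : mxV V X -> Ctilde ip V p X -> mx_herm ip V p X.
Proof. by move=> VX /(CtildeP VX) PX; apply/(mx_hermP VX)/compress_pos_adjoint. Qed.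

Lemma CtildeD n (X Y : 'I_n -> 'I_n -> M2 H) : mxV V X -> mxV V Y ->
  Ctilde ip V p X -> Ctilde ip V p Y -> Ctilde ip V p (mx_add X Y).
Proof.
move=> VX VY /(CtildeP VX) PX /(CtildeP VY) PY.
have VXY : mxV V (mx_add X Y) := fun i j a b => VD os (VX i j a b) (VY i j a b).
by apply/(CtildeP VXY); rewrite compressD; apply: mx_posD.
Qed.

Lemma CtildeZ n (X : 'I_n -> 'I_n -> M2 H) (t : R) : mxV V X -> 0 <= t ->
  Ctilde ip V p X -> Ctilde ip V p (mx_scale t%:C%C X).
Proof.
move=> VX t_ge0 /(CtildeP VX) PX.
have VtX : mxV V (mx_scale t%:C%C X) := fun i j a b => VZ os _ (VX i j a b).
by apply/(CtildeP VtX); rewrite compressZ; apply: mx_posZ; rewrite ?ler0c.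
Qed.

Lemma Ctilde_conj n m (alpha : 'M[R[i]]_(n, m)) (X : 'I_n -> 'I_n -> M2 H) : mxV V X ->
  Ctilde ip V p X -> Ctilde ip V p (mx_conj alpha X).
Proof.
move=> VX /(CtildeP VX) PX.
have Vconj : mxV V (mx_conj alpha X) :=
  fun k l a b => V_sum os _ _ (fun i => V_sum os _ _ (fun j => VZ os _ (VX i j a b))).
apply/(CtildeP Vconj)/mx_posP => g.
have -> : compress p (mx_conj alpha X) = fun u v h =>
    \sum_i \sum_j ((alpha i u.1)^* * alpha j v.1) *: compress p X (i, u.2) (j, v.2) h.
  apply/funext => u; apply/funext => v; apply/funext => h.
  rewrite /compress /mx_conj linear_sum; apply: eq_bigr => i _.
  by rewrite linear_sum; apply: eq_bigr => j _; rewrite linearZ.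
by rewrite (block_form_conj hip _ (fun u v => compress_linear u v VX)); apply: PX.
Qed.

Lemma Ctilde_antisym n (X : 'I_n -> 'I_n -> M2 H) : mxV V X ->
  Ctilde ip V p X -> Ctilde ip V p (mx_scale (-1) X) -> mx_eqJ ip V p X (@mx_zero _ H n).
Proof.
move=> VX /(CtildeP VX) PX.
have VNX : mxV V (mx_scale (-1) X) := fun i j a b => VZ os _ (VX i j a b).
move=> /(CtildeP VNX); rewrite compressZ => /mx_posP PN.
have V0 : mxV V (@mx_zero _ H n) := fun _ _ _ _ => V0 os.
apply/(mx_eqJP VX V0); apply/funext => u; apply/funext => v; apply/funext => h.
rewrite [RHS]linear0; apply: (block_form_eq0 hip (fun u v => compress_linear u v VX)) => g.
by apply: le_anti; rewrite PX andbT -oppr_ge0 -mulN1r -block_formZ.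
Qed.

Definition corner_norm n (g : 'I_n * 'I_2 -> H) : R[i] :=
  \sum_u ip (pq u.2 (g u)) (pq u.2 (g u)).

Lemma corner_norm_ge0 n (g : 'I_n * 'I_2 -> H) : 0 <= corner_norm g.
Proof. by apply: sumr_ge0 => u _; apply: ip_ge0. Qed.

Lemma corner_norm_ge n (g : 'I_n * 'I_2 -> H) u :
  ip (pq u.2 (g u)) (pq u.2 (g u)) <= corner_norm g.
Proof. by rewrite /corner_norm (bigD1 u) //= lerDl sumr_ge0 // => w _; apply: ip_ge0. Qed.

Lemma block_form_compress n (X : 'I_n -> 'I_n -> M2 H) g :
  block_form ip (compress p X) g g =
  block_form ip (fun u v => X u.1 v.1 u.2 v.2) (fun u => pq u.2 (g u)) (fun u => pq u.2 (g u)).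
Proof. by apply: eq_bigr => u _; apply: eq_bigr => v _; rewrite pq_selfadjoint. Qed.

Lemma block_form_unit n (g : 'I_n * 'I_2 -> H) :
  block_form ip (compress p (@unit_n _ _ p n)) g g = corner_norm g.
Proof.
rewrite block_form_compress; apply: eq_bigr => u _.
rewrite (bigD1 u) //= [X in _ + X]big1 => [|v neq_vu].
  by rewrite addr0 /unit_n !eqxx /= pq_idem.
rewrite /unit_n -xpair_eqE eq_sym -!surjective_pairing (negbTE neq_vu).
exact: ip0l.
Qed.

Lemma V_shift n (X : 'I_n -> 'I_n -> M2 H) c : mxV V X ->
  mxV V (mx_add X (mx_scale c (@unit_n _ _ p n))).
Proof.
move=> VX i j a b; have Vunit : V (@unit_n _ _ p n i j a b).
  by rewrite /unit_n; case: (_ && _); [apply: V_pq | apply: V0 os].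
exact (VD os (VX i j a b) (VZ os c Vunit)).
Qed.

Lemma block_form_shift n (X : 'I_n -> 'I_n -> M2 H) (r : R) g :
  block_form ip (compress p (mx_add X (mx_scale r%:C%C (@unit_n _ _ p n)))) g g =
  block_form ip (compress p X) g g + r%:C%C * corner_norm g.
Proof. by rewrite compressD compressZ (block_formD hip) (block_formZ hip) block_form_unit. Qed.

Lemma compress_form_lower_bound n (X : 'I_n -> 'I_n -> M2 H) : mxV V X ->
  exists S : R, 0 <= S /\ forall g, - (S%:C%C * corner_norm g) <=
    block_form ip (compress p X) g g + (block_form ip (compress p X) g g)^*.
Proof.
move=> VX.
have [K [K_ge0 boundX]] := V_bounded_family hip os
  (fun w : ('I_n * 'I_2) * ('I_n * 'I_2) => VX w.1.1 w.2.1 w.1.2 w.2.2).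
exists ((#|{: 'I_n * 'I_2}| * #|{: 'I_n * 'I_2}|)%:R * (K + 1)).
split=> [|g]; first by rewrite mulr_ge0 ?addr_ge0.
rewrite block_form_compress rmorphM rmorphD /= rmorph1 rmorph_nat -mulrA.
apply: (block_formRe_ge hip); first by rewrite ler0c.
  by move=> u v x; apply: (boundX (u, v)).
by move=> u; apply: corner_norm_ge.
Qed.

Lemma unit_n_order_unit n (X : 'I_n -> 'I_n -> M2 H) : mxV V X -> mx_herm ip V p X ->
  exists r : R, 0 < r /\ Ctilde ip V p (mx_add X (mx_scale r%:C%C (@unit_n _ _ p n))).
Proof.
move=> VX /(mx_hermP VX) saX; have [S [S_ge0 lowerX]] := compress_form_lower_bound VX.
exists (S + 1); split; first by rewrite ltr_wpDl.
apply/(CtildeP (V_shift _ VX))/mx_posP => g; rewrite block_form_shift.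
exact: order_unitC (block_form_real hip _ saX) (corner_norm_ge0 g) S_ge0 (lowerX g).
Qed.

Lemma unit_n_archimedean n (X : 'I_n -> 'I_n -> M2 H) : mxV V X -> mx_herm ip V p X ->
  (forall r : R, 0 < r -> Ctilde ip V p (mx_add X (mx_scale r%:C%C (@unit_n _ _ p n)))) ->
  Ctilde ip V p X.
Proof.
move=> VX /(mx_hermP VX) saX shift_pos; apply/(CtildeP VX)/mx_posP => g.
apply: (archimedeanC (block_form_real hip _ saX) (corner_norm_ge0 g)) => r r_gt0.
have /(CtildeP (V_shift _ VX))/mx_posP/(_ g) := shift_pos r r_gt0.
by rewrite block_form_shift.
Qed.

Lemma corner_quotient_operator_system : quotient_is_operator_system ip V p.
Proof.
split; [exact: Jpq_adjoint | exact: Ctilde_herm | exact: CtildeD | exact: CtildeZ |].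
split; [exact: Ctilde_conj | exact: Ctilde_antisym | exact: unit_n_order_unit |].
exact: unit_n_archimedean.
Qed.

End CornerQuotient.

Theorem theorem3p13 (R : realType) (H : lmodType R[i]) (ip : H -> H -> R[i])
  (V : (H -> H) -> Prop) (p : H -> H) :
  hilbert_space ip -> operator_system ip V -> V p -> projection ip p ->
  quotient_is_operator_system ip V p.
Proof.
by move=> [hip _]; apply: corner_quotient_operator_system.
Qed.
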